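(* Let $f:\{0,1\}^n\to\{0,1\}^m$ be a Boolean function which is either constant or balanced. For each $i=0,\dots,m-1$ run the algorithm $\mathrm{GPK}(\mathbf{e}_i)$ and let $\delta_i\in\{0,1\}^n$ be its output. If $f$ is constant, then with certainty $\delta_i=\mathbf{0}$ for all $i$; if $f$ is balanced, then with certainty $\delta_i\neq\mathbf{0}$ for at least one $i$. Consequently, deciding ''constant'' if all $\delta_i=\mathbf{0}$ and ''balanced'' otherwise is always correct.
   Context: A function $f:\{0,1\}^n\to\{0,1\}^m$ is constant if $f(\mathbf{x})$ is the same for all $\mathbf{x}$, and balanced if it takes exactly two distinct values, each on exactly half of the inputs. Bits are indexed from the right starting at $0$ and $\mathbf{e}_i=0^{m-1-i}\,1\,0^{i}\in\{0,1\}^m$. For strings $\mathbf{y},\mathbf{z}$ of equal length, $\mathbf{y}\oplus\mathbf{z}$ is bitwise XOR and $\mathbf{y}\cdot\mathbf{z}=\bigoplus_j y_jz_j$. $\mathbf{U}_f$ is the unitary with $\mathbf{U}_f(\ket{\mathbf{x}}_n\otimes\ket{\mathbf{z}}_m)=\ket{\mathbf{x}}_n\otimes\ket{\mathbf{z}\oplus f(\mathbf{x})}_m$; $\mathbf{H}_k=\mathbf{H}^{\otimes k}$ with $\mathbf{H}$ the one-qubit Hadamard gate. The algorithm $\mathrm{GPK}(\mathbf{y})$ for $\mathbf{y}\in\{0,1\}^m$: start in $\ket{\mathbf{0}}_n\otimes\ket{\mathbf{0}}_m$; apply Pauli $\mathbf{X}$ gates to get $\ket{\mathbf{0}}_n\otimes\ket{\mathbf{y}}_m$;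 apply $\mathbf{H}_{n+m}$; apply $\mathbf{U}_f$; apply $\mathbf{H}_n$ to the first register; measure the first register in the computational basis, giving the output in $\{0,1\}^n$. *)

From HB Require Import structures.
From mathcomp Require Import all_boot all_order all_algebra all_field.
Unset Printing Implicit Defensive.
Import Order.TTheory GRing.Theory Num.Theory.
Local Open Scope ring_scope.

(* Bit strings of length k: bit j (j : 'I_k) is the bit with index j
   (indexing from the right starting at 0). *)
Definition bits (k : nat) := {ffun 'I_k -> bool}.

Definition bzero (k : nat) : bits k := [ffun _ => false].
Definition bxor (k : nat) (y z : bits k) : bits k := [ffun j => xorb (y j) (z j)].
Definition bdot (k : nat) (y z : bits k) : bool := \big[addb/false]_(j < k) (y j && z j).
Definition unitbits (m : nat) (i : 'I_m) : bits m := [ffun j => j == i].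

Definition is_constant (n m : nat) (f : bits n -> bits m) : Prop :=
  exists c : bits m, forall x, f x = c.

Definition is_balanced (n m : nat) (f : bits n -> bits m) : Prop :=
  exists a b : bits m, [/\ a != b, (forall x, f x = a \/ f x = b),
    (#|[pred x | f x == a]|).*2 = (2 ^ n)%N & (#|[pred x | f x == b]|).*2 = (2 ^ n)%N].

(* States of the n+m qubit system: amplitude of each basis vector |x>_n (x) |z>_m. *)
Definition state (n m : nat) := bits n * bits m -> algC.

Definition Hent (b c : bool) : algC := (-1) ^+ (b && c) / sqrtC 2.
(* Matrix entry <w|H^{(x)k}|x> of the k-fold tensor power *)
Definition Hk (k : nat) (w x : bits k) : algC := \prod_(j < k) Hent (w j) (x j).

Definition ket0 (n m : nat) : state n m :=
  fun p => if p == (bzero n, bzero m) then 1 else 0.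
(* Pauli X on every second-register qubit j with y_j = 1: |x>|z> |-> |x>|z xor y> *)
Definition applyX (n m : nat) (y : bits m) (psi : state n m) : state n m :=
  fun p => psi (p.1, bxor m p.2 y).
Definition applyHall (n m : nat) (psi : state n m) : state n m :=
  fun p => \sum_(x : bits n) \sum_(z : bits m) Hk n p.1 x * Hk m p.2 z * psi (x, z).
(* U_f : |x>|z> |-> |x>|z xor f x>  (amplitude form, U_f being an involution) *)
Definition applyUf (n m : nat) (f : bits n -> bits m) (psi : state n m) : state n m :=
  fun p => psi (p.1, bxor m p.2 (f p.1)).
Definition applyH1 (n m : nat) (psi : state n m) : state n m :=
  fun p => \sum_(x : bits n) Hk n p.1 x * psi (x, p.2).

Definition GPK_final (n m : nat) (f : bits n -> bits m) (y : bits m) : state n m :=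
  applyH1 n m (applyUf n m f (applyHall n m (applyX n m y (ket0 n m)))).

(* Probability that measuring the first register in the computational basis yields w *)
Definition GPK_prob (n m : nat) (f : bits n -> bits m) (y : bits m) (w : bits n) : algC :=
  \sum_(z : bits m) `|GPK_final n m f y (w, z)| ^+ 2.

From mathcomp Require Import all_boot all_order all_algebra all_field.
From mathcomp Require Import ring.
Import GRing.Theory Num.Theory.
Local Open Scope ring_scope.

(* With input e_i, the X gate and the Hadamards leave the second register in a
   state on which U_f acts as the phase (-1)^(f(x)_i), so after the final
   Hadamards the amplitude of |0>|z> is 2^(-(2n+m)/2) sum_x (-1)^(z_i xor f(x)_i):
   bit i of f is queried as a Deutsch-Jozsa oracle. For constant f each such
   sum has modulus 2^n and 0 is read with probability 1. For balanced f with
   values a <> b, pick i with a_i <> b_i: the two halves of the inputs then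
   contribute opposite signs, so every amplitude vanishes. *)

Lemma sum_balanced {T : finType} {U : eqType} {V : nmodType}
    (F : U -> V) (f : T -> U) (a b : U) :
  a != b -> (forall x, f x = a \/ f x = b) ->
  #|[pred x | f x == a]| = #|[pred x | f x == b]| ->
  \sum_x F (f x) = (F a + F b) *+ #|[pred x | f x == a]|.
Proof.
move=> neq_ab f_ab card_ab.
have fNa x : (f x != a) = (f x == b).
  by case: (f_ab x) => ->; rewrite eqxx ?(negbTE neq_ab) // eq_sym (negbTE neq_ab).
rewrite (bigID [pred x | f x == a]) /=.
have -> : \sum_(x | f x == a) F (f x) = \sum_(x | f x == a) F a.
  by apply: eq_bigr => x /eqP ->.
have -> : \sum_(x | f x != a) F (f x) = \sum_(x | f x == b) F b.
  by apply: eq_big => x; rewrite fNa // => /eqP ->.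
by rewrite !sumr_const card_ab -mulrnDl.
Qed.

Lemma signr_xorb_add_eq0 (R : pzRingType) (c a b : bool) :
  a != b -> (-1) ^+ xorb c a + (-1) ^+ xorb c b = 0 :> R.
Proof. by case: a b c => [] [] [] //= _; rewrite ?expr0 ?expr1 ?addrN ?addNr. Qed.

Lemma card_bits k : #|bits k| = (2 ^ k)%N.
Proof. by rewrite card_ffun card_bool card_ord. Qed.

Lemma bxor_eq0 k (y z : bits k) : (bxor k z y == bzero k) = (z == y).
Proof.
apply/eqP/eqP => [/ffunP xor0 | ->]; apply/ffunP => j.
  by have := xor0 j; rewrite !ffunE; case: (z j) (y j) => [] [].
by rewrite !ffunE; case: (y j).
Qed.

Definition invsqrt2 : algC := (sqrtC 2)^-1.

Lemma invsqrt2_ge0 : 0 <= invsqrt2.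
Proof. by rewrite invr_ge0 sqrtC_ge0 ler0n. Qed.

Lemma sqr_invsqrt2 : invsqrt2 ^+ 2 = 2^-1.
Proof. by rewrite exprVn sqrtCK. Qed.

Lemma Hent_sign b c : Hent b c = (-1) ^+ (b && c) * invsqrt2.
Proof. by []. Qed.

Lemma Hk_bzero_l k x : Hk k (bzero k) x = invsqrt2 ^+ k.
Proof.
rewrite /Hk; under eq_bigr => j _ do rewrite Hent_sign ffunE /= mul1r.
by rewrite prodr_const card_ord.
Qed.

Lemma Hk_bzero_r k w : Hk k w (bzero k) = invsqrt2 ^+ k.
Proof.
rewrite /Hk; under eq_bigr => j _ do rewrite Hent_sign ffunE andbF mul1r.
by rewrite prodr_const card_ord.
Qed.

Lemma Hk_unitbits m z i : Hk m z (unitbits m i) = (-1) ^+ z i * invsqrt2 ^+ m.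
Proof.
rewrite /Hk; under eq_bigr => j _ do rewrite Hent_sign ffunE.
rewrite big_split /= prodr_const card_ord (bigD1 i) //= eqxx andbT big1 ?mulr1 //.
by move=> j /negbTE ->; rewrite andbF.
Qed.

Lemma applyX_ket0 n m y p :
  applyX n m y (ket0 n m) p = (p == (bzero n, y))%:R.
Proof. by case: p => x z; rewrite /applyX /ket0 !xpair_eqE bxor_eq0; case: ifP. Qed.

Lemma applyHall_X_ket0 n m y p :
  applyHall n m (applyX n m y (ket0 n m)) p = Hk n p.1 (bzero n) * Hk m p.2 y.
Proof.
rewrite /applyHall pair_bigA /=.
under eq_bigr => q _ do rewrite applyX_ket0 -surjective_pairing mulr_natr mulrb.
by rewrite -big_mkcond big_pred1_eq.
Qed.

(* Stated with [xorb], as in [bxor]: [addb], behind the notation [(+)], is not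
   convertible to it. *)
Lemma GPK_final_bzero n m f i z :
  GPK_final n m f (unitbits m i) (bzero n, z) =
  invsqrt2 ^+ (n.*2 + m) * \sum_x (-1) ^+ xorb (z i) (f x i).
Proof.
rewrite /GPK_final /applyH1 /applyUf mulr_sumr; apply: eq_bigr => x _.
rewrite applyHall_X_ket0 /= Hk_bzero_l Hk_bzero_r Hk_unitbits ffunE.
by rewrite -addnn !exprD; ring.
Qed.

Lemma GPK_prob_bzero n m f i :
  GPK_prob n m f (unitbits m i) (bzero n) =
  2^-1 ^+ (n.*2 + m) *
    \sum_(z : bits m) `|\sum_x (-1) ^+ xorb (z i) (f x i) : algC| ^+ 2.
Proof.
rewrite /GPK_prob mulr_sumr; apply: eq_bigr => z _.
by rewrite GPK_final_bzero normrM normrX ger0_norm ?invsqrt2_ge0 // exprMn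
  -exprM mulnC exprM sqr_invsqrt2.
Qed.

Lemma GPK_prob_constant n m f c i : (forall x, f x = c) ->
  GPK_prob n m f (unitbits m i) (bzero n) = 1.
Proof.
move=> f_c; rewrite GPK_prob_bzero.
have norm_sum z : `|\sum_x (-1) ^+ xorb (z i) (f x i) : algC| = 2 ^+ n.
  by under eq_bigr do rewrite f_c; rewrite sumr_const card_bits normrMn normr_sign natrX.
under eq_bigr do rewrite norm_sum.
rewrite sumr_const card_bits -exprM muln2 -[_ ^+ _ *+ _]mulr_natr natrX -exprD exprVn.
by rewrite mulVf // expf_neq0 // pnatr_eq0.
Qed.

Lemma GPK_prob_balanced n m f : is_balanced n m f ->
  exists i, GPK_prob n m f (unitbits m i) (bzero n) = 0.
Proof.
case=> a [b [neq_ab f_ab card_a card_b]].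
have /existsP[i neq_abi] : [exists i, a i != b i].
  apply: contraR neq_ab => /existsPn same_ab.
  by apply/eqP/ffunP => j; apply/eqP/negPn/same_ab.
exists i; rewrite GPK_prob_bzero big1 ?mulr0 // => z _.
rewrite (sum_balanced (fun y : bits m => (-1) ^+ xorb (z i) (y i)) _ _ _ neq_ab f_ab).
  by rewrite signr_xorb_add_eq0 // mul0rn normr0 expr0n.
by apply: double_inj; rewrite card_a card_b.
Qed.

Theorem theorem3p4 (n m : nat) (f : bits n -> bits m) :
  (is_constant n m f \/ is_balanced n m f) ->
  (is_constant n m f -> forall i : 'I_m, GPK_prob n m f (unitbits m i) (bzero n) = 1) /\
  (is_balanced n m f -> exists i : 'I_m, GPK_prob n m f (unitbits m i) (bzero n) = 0).
Proof.
move=> _; split; last exact: GPK_prob_balanced.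
by case=> c f_c i; apply: GPK_prob_constant f_c.
Qed.
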